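(* With the notation of the context, $$\|\mathrm T^{{\rm b},m}\|^2_{kk_1\to k_2k_3}\lesssim(N_2\wedge N_3)^{2-\alpha}N_1^{2-\alpha},\qquad \|\mathrm T^{{\rm b},m}\|^2_{kk_3\to k_1k_2}\lesssim(N_1\wedge N_2)^{2-\alpha}N_3^{2-\alpha},$$ $$\|\mathrm T^{{\rm b},m}\|^2_{kk_2\to k_1k_3}\lesssim(N_1\wedge N_3)^{1-\frac\alpha2}(N\wedge N_2)^{1-\frac\alpha2}.$$
   Context: Fix $\alpha\in(1,2)$, dyadic numbers $1\le N_1,N_2,N_3\le N$, a real number $m$ and a constant $C_0>0$. Let $S$ be the set of $(k,k_1,k_2,k_3)\in\mathbb Z^4$ with $k=k_1-k_2+k_3$, $k_2\notin\{k_1,k_3\}$, $\big||k_1|^\alpha-|k_2|^\alpha+|k_3|^\alpha-|k|^\alpha-m\big|\le C_0$, $|k|\le N$ and $|k_j|\le N_j$ for $j=1,2,3$. The base tensor is $\mathrm T^{{\rm b},m}_{kk_1k_2k_3}=\mathbf 1_S(k,k_1,k_2,k_3)$. For a tensor $H=H_{k_A}$ indexed by $k_A=(k_j)_{j\in A}\in\mathbb Z^A$ and a partition $(B,C)$ of $A$, $\|H\|_{k_B\to k_C}^2=\sup\{\sum_{k_C}|\sum_{k_B}H_{k_A}z_{k_B}|^2:\sum_{k_B}|z_{k_B}|^2=1\}$ (the $\ell^2_{k_B}\to\ell^2_{k_C}$ operator norm; for $C=\emptyset$ it is the $\ell^2_{k_A}$ norm). $a\wedge b=\min(a,b)$. $A\lesssim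 B$ means $A\le CB$ with $C$ depending only on $\alpha$ and $C_0$. *)

From Stdlib Require Import Reals ZArith List.
From Coquelicot Require Import Coquelicot.
Open Scope R_scope.

(* x^a for x >= 0, with the convention 0^a = 0 (Stdlib's Rpower 0 a = 1). *)
Definition rpow (x a : R) : R :=
  if Rlt_dec 0 x then Rpower x a else 0.

Definition zbox (M : nat) : list Z :=
  map (fun i => (Z.of_nat i - Z.of_nat M)%Z) (seq 0 (2 * M + 1)).

Definition zsum (l : list Z) (f : Z -> R) : R :=
  fold_right (fun x acc => f x + acc) 0 l.
Definition csum (l : list Z) (f : Z -> C) : C :=
  fold_right (fun x acc => Cplus (f x) acc) (RtoC 0) l.

Definition Tb (alpha C0 m : R) (N N1 N2 N3 : nat) (k k1 k2 k3 : Z) : R :=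
  if Z.eq_dec k (k1 - k2 + k3)%Z then
  if Z.eq_dec k2 k1 then 0 else
  if Z.eq_dec k2 k3 then 0 else
  if Rle_dec (Rabs (rpow (IZR (Z.abs k1)) alpha - rpow (IZR (Z.abs k2)) alpha
                    + rpow (IZR (Z.abs k3)) alpha - rpow (IZR (Z.abs k)) alpha - m)) C0 then
  if Z_le_dec (Z.abs k) (Z.of_nat N) then
  if Z_le_dec (Z.abs k1) (Z.of_nat N1) then
  if Z_le_dec (Z.abs k2) (Z.of_nat N2) then
  if Z_le_dec (Z.abs k3) (Z.of_nat N3) then 1 else 0 else 0 else 0 else 0
  else 0 else 0.

(* For a 4-index tensor H written as H b1 b2 c1 c2, and lists Lb1 Lb2 Lc1 Lc2
   containing its support in each index:
   opQ z = sum_{c1,c2} | sum_{b1,b2} H b1 b2 c1 c2 z(b1,b2) |^2. *)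
Definition opQ (H : Z -> Z -> Z -> Z -> R) (Lb1 Lb2 Lc1 Lc2 : list Z)
  (z : Z -> Z -> C) : R :=
  zsum Lc1 (fun c1 => zsum Lc2 (fun c2 =>
    (Cmod (csum Lb1 (fun b1 => csum Lb2 (fun b2 =>
        Cmult (RtoC (H b1 b2 c1 c2)) (z b1 b2))))) ^ 2)).

(* ||H||^2_{b1 b2 -> c1 c2} <= X, i.e. the supremum over (complex) z with
   ||z||_{l^2} = 1 of opQ z is at most X.  Only the values of z on the support
   box matter, so we quantify over z whose l^2 norm on the box is <= 1. *)
Definition opnorm2_le (H : Z -> Z -> Z -> Z -> R) (Lb1 Lb2 Lc1 Lc2 : list Z)
  (X : R) : Prop :=
  forall z : Z -> Z -> C,
    zsum Lb1 (fun b1 => zsum Lb2 (fun b2 => (Cmod (z b1 b2)) ^ 2)) <= 1 ->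
    opQ H Lb1 Lb2 Lc1 Lc2 z <= X.

(* Each squared norm ||T||^2_{B -> C} is bounded by Schur's test: it is at
   most R * Q, where R bounds the sums of T over the C-indices with the
   B-indices fixed, and Q the sums over the B-indices with the C-indices
   fixed.  Since T is supported on k = k1 - k2 + k3, each of these six double
   sums collapses to a count of integers x in a box obeying a resonance
   condition, with M the smaller of the two box sizes involved:
   - difference type | |x + D|^a - |x|^a - c | <= C0 with D <> 0: the phase
     has slope >= |D| M^(a-2) (up to constants), so its resonant set is an
     interval of length O(M^(2-a));
   - sum type | |x|^a + |s - x|^a - c | <= C0: the phase is uniformly convex
     with modulus ~ M^(a-2), so no three resonant points can be spread out
     by more than O(M^(1-a/2)), which bounds the count by O(M^(1-a/2)). *)

From Stdlib Require Import Reals ZArith List Lra Lia.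
From Coquelicot Require Import Coquelicot.
Open Scope R_scope.

(* Real and complex sums over a list; [zsum] and [csum] are their instances
   at index type Z, but Schur's test also needs sums over lists of pairs. *)
Definition gsum {A : Type} (l : list A) (f : A -> R) : R :=
  fold_right (fun x acc => f x + acc) 0 l.
Definition gcsum {A : Type} (l : list A) (f : A -> C) : C :=
  fold_right (fun x acc => Cplus (f x) acc) (RtoC 0) l.

Lemma gsum_cons {A} a l (f : A -> R) : gsum (a :: l) f = f a + gsum l f.
Proof. reflexivity. Qed.

Lemma gsum_app {A} (l1 l2 : list A) f : gsum (l1 ++ l2) f = gsum l1 f + gsum l2 f.
Proof. induction l1 as [|a l1 IH]; [simpl; lra|]. cbn [app]; rewrite !gsum_cons, IH; lra. Qed.

Lemma gsum_map {A B} (g : A -> B) l f : gsum (map g l) f = gsum l (fun x => f (g x)).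
Proof. induction l as [|a l IH]; [reflexivity|]. simpl map; rewrite !gsum_cons, IH; auto. Qed.

Lemma gsum_ext {A} (l : list A) f g : (forall x, f x = g x) -> gsum l f = gsum l g.
Proof. intros H; induction l as [|a l IH]; [reflexivity|]. rewrite !gsum_cons, H, IH; auto. Qed.

Lemma gsum_le {A} (l : list A) f g : (forall x, f x <= g x) -> gsum l f <= gsum l g.
Proof. intros H; induction l as [|a l IH]; [apply Rle_refl|]. rewrite !gsum_cons; specialize (H a); lra. Qed.

Lemma gsum_nonneg {A} (l : list A) f : (forall x, 0 <= f x) -> 0 <= gsum l f.
Proof. intros H; induction l as [|a l IH]; [apply Rle_refl|]. rewrite gsum_cons; specialize (H a); lra. Qed.

Lemma gsum_plus {A} (l : list A) f g : gsum l (fun x => f x + g x) = gsum l f + gsum l g.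
Proof. induction l as [|a l IH]; [simpl; lra|]. rewrite !gsum_cons, IH; lra. Qed.

Lemma gsum_scal {A} (l : list A) c f : gsum l (fun x => c * f x) = c * gsum l f.
Proof. induction l as [|a l IH]; [simpl; lra|]. rewrite !gsum_cons, IH; lra. Qed.

Lemma gsum_swap {A B} (l1 : list A) (l2 : list B) f :
  gsum l1 (fun a => gsum l2 (fun b => f a b)) = gsum l2 (fun b => gsum l1 (fun a => f a b)).
Proof.
  induction l1 as [|a l1 IH].
  - symmetry; induction l2 as [|b l2 IH2]; [simpl; lra|]. rewrite gsum_cons, IH2. simpl; lra.
  - rewrite gsum_cons, IH, <- gsum_plus. apply gsum_ext; intros; rewrite gsum_cons; auto.
Qed.

Lemma gsum_prod {A B} (l1 : list A) (l2 : list B) f :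
  gsum l1 (fun a => gsum l2 (fun b => f a b)) = gsum (list_prod l1 l2) (fun p => f (fst p) (snd p)).
Proof.
  induction l1 as [|a l1 IH]; [reflexivity|].
  simpl list_prod. rewrite gsum_app, gsum_map, gsum_cons, IH. reflexivity.
Qed.

Lemma gcsum_app {A} (l1 l2 : list A) f : gcsum (l1 ++ l2) f = Cplus (gcsum l1 f) (gcsum l2 f).
Proof.
  induction l1 as [|a l1 IH]; simpl.
  - unfold gcsum; simpl. rewrite Cplus_0_l; auto.
  - unfold gcsum in *; simpl. rewrite IH, Cplus_assoc; auto.
Qed.

Lemma gcsum_map {A B} (g : A -> B) l f : gcsum (map g l) f = gcsum l (fun x => f (g x)).
Proof. induction l as [|a l IH]; simpl; auto. unfold gcsum in *; simpl; rewrite IH; auto. Qed.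

Lemma gcsum_prod {A B} (l1 : list A) (l2 : list B) f :
  gcsum l1 (fun a => gcsum l2 (fun b => f a b)) = gcsum (list_prod l1 l2) (fun p => f (fst p) (snd p)).
Proof.
  induction l1 as [|a l1 IH]; [reflexivity|].
  simpl list_prod. rewrite gcsum_app, gcsum_map, <- IH. reflexivity.
Qed.

Lemma Cmod_gcsum_le {A} (l : list A) (h : A -> R) (z : A -> C) :
  (forall x, 0 <= h x) ->
  Cmod (gcsum l (fun b => Cmult (RtoC (h b)) (z b))) <= gsum l (fun b => h b * Cmod (z b)).
Proof.
  intros H; induction l as [|a l IH]; unfold gcsum, gsum in *; simpl.
  - rewrite Cmod_0; lra.
  - eapply Rle_trans; [apply Cmod_triangle|].
    rewrite Cmod_mult, Cmod_R, Rabs_pos_eq by auto. lra.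
Qed.

(* Cauchy-Schwarz with weights h >= 0: (sum h a)^2 <= (sum h) (sum h a^2).
   Proof: the quadratic t |-> sum h (a - t)^2 is nonnegative. *)
Lemma weighted_cauchy_schwarz {A} (l : list A) h a : (forall x, 0 <= h x) ->
  (gsum l (fun b => h b * a b))^2 <= gsum l h * gsum l (fun b => h b * (a b)^2).
Proof.
  intros Hh.
  set (S0 := gsum l h). set (S1 := gsum l (fun b => h b * a b)).
  set (S2 := gsum l (fun b => h b * (a b)^2)).
  assert (quadratic : forall t, 0 <= S2 - 2 * t * S1 + t^2 * S0).
  { intros t.
    replace (S2 - 2 * t * S1 + t^2 * S0) with (gsum l (fun b => h b * (a b - t)^2)).
    - apply gsum_nonneg; intros x. apply Rmult_le_pos; [auto|apply pow2_ge_0].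
    - unfold S0, S1, S2. induction l as [|b l IH]; [simpl; ring|].
      rewrite !gsum_cons, IH; ring. }
  assert (HS0 : 0 <= S0) by (apply gsum_nonneg; auto).
  destruct (Req_dec S0 0) as [E|E].
  - destruct (Req_dec S1 0) as [E1|E1]; [rewrite E1, E; lra|].
    specialize (quadratic ((S2 + 1) / (2 * S1))). rewrite E in quadratic.
    replace (S2 - 2 * ((S2 + 1) / (2 * S1)) * S1 + ((S2 + 1) / (2 * S1)) ^ 2 * 0)
      with (-1) in quadratic by (field; auto). lra.
  - specialize (quadratic (S1 / S0)).
    replace (S2 - 2 * (S1 / S0) * S1 + (S1 / S0) ^ 2 * S0)
      with ((S0 * S2 - S1^2) / S0) in quadratic by (field; auto).
    assert (0 <= S0 * S2 - S1^2); [|lra].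
    apply (Rmult_le_reg_r (/ S0)); [apply Rinv_0_lt_compat; lra|].
    rewrite Rmult_0_l; exact quadratic.
Qed.

Lemma schur_test_list {B Cc : Type} (Lb : list B) (Lc : list Cc) (H : B -> Cc -> R)
    (z : B -> C) R0 Q0 :
  (forall b c, 0 <= H b c) -> 0 <= R0 -> 0 <= Q0 ->
  (forall b, gsum Lc (fun c => H b c) <= R0) ->
  (forall c, gsum Lb (fun b => H b c) <= Q0) ->
  gsum Lb (fun b => (Cmod (z b))^2) <= 1 ->
  gsum Lc (fun c => (Cmod (gcsum Lb (fun b => Cmult (RtoC (H b c)) (z b))))^2) <= R0 * Q0.
Proof.
  intros Hpos HR HQ Hrow Hcol Hz.
  (* each output coordinate: Cauchy-Schwarz with the weights H(., c) *)
  apply Rle_trans with (gsum Lc (fun c => Q0 * gsum Lb (fun b => H b c * (Cmod (z b))^2))).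
  { apply gsum_le; intros c.
    assert (Htri := Cmod_gcsum_le Lb (fun b => H b c) z (fun b => Hpos b c)).
    assert (Hcs := weighted_cauchy_schwarz Lb (fun b => H b c) (fun b => Cmod (z b))
                     (fun b => Hpos b c)).
    assert (0 <= gsum Lb (fun b => H b c * Cmod (z b) ^ 2)).
    { apply gsum_nonneg; intros; apply Rmult_le_pos; [auto|apply pow2_ge_0]. }
    specialize (Hcol c).
    apply Rle_trans with ((gsum Lb (fun b => H b c * Cmod (z b)))^2).
    { apply pow_incr; split; [apply Cmod_ge_0|exact Htri]. }
    eapply Rle_trans; [exact Hcs|]. apply Rmult_le_compat_r; auto. }
  (* then exchange the sums and use the row bound *)
  rewrite gsum_scal, gsum_swap.
  apply Rle_trans with (Q0 * gsum Lb (fun b => R0 * (Cmod (z b))^2)).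
  { apply Rmult_le_compat_l; auto. apply gsum_le; intros b.
    rewrite <- (gsum_ext Lc (fun c => (Cmod (z b))^2 * H b c)) by (intros; ring).
    rewrite gsum_scal, Rmult_comm. apply Rmult_le_compat_r; auto. apply pow2_ge_0. }
  rewrite gsum_scal. replace (R0 * Q0) with (Q0 * R0 * 1) by ring.
  rewrite <- Rmult_assoc. apply Rmult_le_compat_l; auto. apply Rmult_le_pos; auto.
Qed.

Lemma schur_test (H : Z -> Z -> Z -> Z -> R) Lb1 Lb2 Lc1 Lc2 R0 Q0 :
  (forall b1 b2 c1 c2, 0 <= H b1 b2 c1 c2) -> 0 <= R0 -> 0 <= Q0 ->
  (forall b1 b2, zsum Lc1 (fun c1 => zsum Lc2 (fun c2 => H b1 b2 c1 c2)) <= R0) ->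
  (forall c1 c2, zsum Lb1 (fun b1 => zsum Lb2 (fun b2 => H b1 b2 c1 c2)) <= Q0) ->
  opnorm2_le H Lb1 Lb2 Lc1 Lc2 (R0 * Q0).
Proof.
  intros Hpos HR HQ Hrow Hcol z Hz. unfold opQ.
  change (gsum Lc1 (fun c1 => gsum Lc2 (fun c2 =>
     Cmod (gcsum Lb1 (fun b1 => gcsum Lb2 (fun b2 =>
       Cmult (RtoC (H b1 b2 c1 c2)) (z b1 b2)))) ^ 2)) <= R0 * Q0).
  rewrite gsum_prod.
  erewrite gsum_ext; [| intros p; rewrite gcsum_prod; reflexivity].
  apply (schur_test_list (list_prod Lb1 Lb2) (list_prod Lc1 Lc2)
           (fun b c => H (fst b) (snd b) (fst c) (snd c)) (fun b => z (fst b) (snd b))); auto.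
  - intros b. rewrite <- (gsum_prod Lc1 Lc2 (fun c1 c2 => H (fst b) (snd b) c1 c2)). apply Hrow.
  - intros c. rewrite <- (gsum_prod Lb1 Lb2 (fun b1 b2 => H b1 b2 (fst c) (snd c))). apply Hcol.
  - rewrite <- (gsum_prod Lb1 Lb2 (fun b1 b2 => Cmod (z b1 b2) ^ 2)). exact Hz.
Qed.

Lemma schur_test_scaled (H : Z -> Z -> Z -> Z -> R) Lb1 Lb2 Lc1 Lc2 K P Q C :
  (forall b1 b2 c1 c2, 0 <= H b1 b2 c1 c2) -> 0 <= K -> 0 <= P -> 0 <= Q -> K * K <= C ->
  (forall b1 b2, zsum Lc1 (fun c1 => zsum Lc2 (fun c2 => H b1 b2 c1 c2)) <= K * P) ->
  (forall c1 c2, zsum Lb1 (fun b1 => zsum Lb2 (fun b2 => H b1 b2 c1 c2)) <= K * Q) ->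
  opnorm2_le H Lb1 Lb2 Lc1 Lc2 (C * (P * Q)).
Proof.
  intros Hpos HK HP HQ HC Hrow Hcol z Hz.
  eapply Rle_trans; [apply (schur_test H _ _ _ _ (K * P) (K * Q)); auto|].
  - apply Rmult_le_pos; auto.
  - apply Rmult_le_pos; auto.
  - replace (K * P * (K * Q)) with (K * K * (P * Q)) by ring.
    apply Rmult_le_compat_r; auto. apply Rmult_le_pos; auto.
Qed.

Lemma zbox_NoDup M : NoDup (zbox M).
Proof.
  unfold zbox. apply NoDup_map_NoDup_ForallPairs; [|apply seq_NoDup].
  intros x y _ _ E; lia.
Qed.

Lemma NoDup_interval_length (l : list Z) a n :
  NoDup l -> (forall x, In x l -> (a <= x <= a + Z.of_nat n)%Z) -> (length l <= S n)%nat.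
Proof.
  intros Hnd Hl.
  set (interval := map (fun i => (a + Z.of_nat i)%Z) (seq 0 (S n))).
  replace (S n) with (length interval) by (unfold interval; rewrite length_map, length_seq; auto).
  apply NoDup_incl_length; auto.
  intros x Hx. apply in_map_iff. exists (Z.to_nat (x - a)).
  specialize (Hl x Hx). split; [lia|]. apply in_seq; lia.
Qed.

Lemma list_min_exists (l : list Z) : l <> nil -> exists m, In m l /\ forall y, In y l -> (m <= y)%Z.
Proof.
  induction l as [|a l IH]; intros Hne; [congruence|].
  destruct l as [|b l'].
  - exists a. split; [left; auto|]. intros y [<-|[]]; lia.
  - destruct IH as [m [Hm Hmin]]; [congruence|].
    destruct (Z_le_dec a m).
    + exists a. split; [left; auto|]. intros y [<-|Hy]; [lia|]. specialize (Hmin y Hy); lia.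
    + exists m. split; [right; auto|]. intros y [<-|Hy]; [lia|]. auto.
Qed.

Lemma list_max_exists (l : list Z) : l <> nil -> exists m, In m l /\ forall y, In y l -> (y <= m)%Z.
Proof.
  intros Hne. destruct (list_min_exists (map Z.opp l)) as [m [Hm Hmin]].
  { destruct l; [congruence|discriminate]. }
  apply in_map_iff in Hm. destruct Hm as [x [<- Hx]].
  exists x. split; auto. intros y Hy. specialize (Hmin (- y)%Z (in_map _ _ _ Hy)). lia.
Qed.

Definition supportb (f : Z -> R) (x : Z) : bool := if Rlt_dec 0 (f x) then true else false.

Lemma In_support (l : list Z) f x : In x (filter (supportb f) l) -> In x l /\ 0 < f x.
Proof.
  intros Hx. apply filter_In in Hx. destruct Hx as [Hx Hs]. unfold supportb in Hs.
  destruct (Rlt_dec 0 (f x)); [auto|discriminate].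
Qed.

Lemma gsum_le_support_size (l : list Z) f : (forall x, 0 <= f x <= 1) ->
  gsum l f <= INR (length (filter (supportb f) l)).
Proof.
  intros Hf. induction l as [|a l IH]; [simpl; lra|].
  rewrite gsum_cons. simpl filter. unfold supportb at 1. specialize (Hf a).
  destruct (Rlt_dec 0 (f a)); [simpl length; rewrite S_INR|]; lra.
Qed.

(* Counting principle for both resonance bounds: if f takes values in [0, 1]
   and its support contains no triple x < y < w with both gaps larger than L,
   then the sum of f over distinct integers is at most 2 L + 2.  (Split the
   support at distance L from its minimum; the far part lies within L of the
   maximum.) *)
Lemma gsum_le_of_no_spread_triple (l : list Z) (f : Z -> R) (L : nat) :
  NoDup l -> (forall x, 0 <= f x <= 1) ->
  (forall x y w, 0 < f x -> 0 < f y -> 0 < f w -> (x < y < w)%Z ->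
       (y - x > Z.of_nat L)%Z -> (w - y > Z.of_nat L)%Z -> False) ->
  gsum l f <= 2 * INR L + 2.
Proof.
  intros Hnd Hf Hno.
  eapply Rle_trans; [apply gsum_le_support_size; auto|].
  set (supp := filter (supportb f) l).
  assert (Hnds : NoDup supp) by (apply NoDup_filter; auto).
  destruct supp as [|x0 l0] eqn:Esupp.
  { simpl. pose proof (pos_INR L). lra. }
  rewrite <- Esupp in *.
  destruct (list_min_exists supp) as [m [Hm Hmin]]; [rewrite Esupp; congruence|].
  destruct (list_max_exists supp) as [M [HM Hmax]]; [rewrite Esupp; congruence|].
  set (near_min := fun x => (x - m <=? Z.of_nat L)%Z).
  rewrite <- (filter_length near_min supp).
  assert (Hnear : (length (filter near_min supp) <= S L)%nat).
  { apply NoDup_interval_length with m; [apply NoDup_filter; auto|].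
    intros x Hx. apply filter_In in Hx. destruct Hx as [Hx Hq].
    apply Z.leb_le in Hq. specialize (Hmin x Hx). lia. }
  assert (Hfar : (length (filter (fun x => negb (near_min x)) supp) <= S L)%nat).
  { apply NoDup_interval_length with (M - Z.of_nat L)%Z; [apply NoDup_filter; auto|].
    intros x Hx. apply filter_In in Hx. destruct Hx as [Hx Hq].
    apply Bool.negb_true_iff, Z.leb_gt in Hq. specialize (Hmax x Hx).
    destruct (Z_le_dec (M - x) (Z.of_nat L)); [lia|exfalso].
    apply (Hno m x M); try lia; eapply In_support; eauto. }
  rewrite plus_INR. apply le_INR in Hnear, Hfar. rewrite S_INR in Hnear, Hfar. lra.
Qed.

Lemma gsum_le_single_point (l : list Z) f y0 : NoDup l -> (forall y, y <> y0 -> f y = 0) ->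
  (forall y, 0 <= f y) -> gsum l f <= f y0.
Proof.
  intros Hnd Hzero Hpos.
  assert (Hout : forall l', ~ In y0 l' -> gsum l' f = 0).
  { induction l' as [|a l' IH]; intros Hnin; [reflexivity|].
    rewrite gsum_cons, Hzero, IH; [lra| |]; intros E; apply Hnin; [right|left]; auto. }
  induction l as [|a l IH]; [simpl; auto|].
  rewrite gsum_cons. inversion Hnd as [|a' l' Hnin Hnd']; subst.
  destruct (Z.eq_dec a y0) as [->|Hne].
  - rewrite Hout; auto; lra.
  - rewrite Hzero, Rplus_0_l by auto. auto.
Qed.

Lemma Rabs_le_iff t A : Rabs t <= A <-> - A <= t <= A.
Proof. unfold Rabs; destruct (Rcase_abs t); split; intros; lra. Qed.

Lemma rpow_of_pos x a : 0 < x -> rpow x a = Rpower x a.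
Proof. intros H; unfold rpow; destruct (Rlt_dec 0 x); [auto|lra]. Qed.

Lemma rpow_0 a : rpow 0 a = 0.
Proof. unfold rpow; destruct (Rlt_dec 0 0); [lra|auto]. Qed.

Lemma Rpower_pos x a : 0 < Rpower x a.
Proof. apply exp_pos. Qed.

Lemma Rpower_split x e : 0 < x -> Rpower x e = x * Rpower x (e - 1).
Proof. intros H. replace e with (1 + (e - 1)) at 1 by ring. rewrite Rpower_plus, Rpower_1; auto. Qed.

Lemma Rpower_antitone_base a b c : 0 < a <= b -> c <= 0 -> Rpower b c <= Rpower a c.
Proof.
  intros Hab Hc.
  replace c with (- - c) by ring. rewrite (Rpower_Ropp b (- c)), (Rpower_Ropp a (- c)).
  apply Rinv_le_contravar; [apply Rpower_pos|]. apply Rle_Rpower_l; lra.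
Qed.

Lemma Rpower_ge1 x e : 1 <= x -> 0 <= e -> 1 <= Rpower x e.
Proof. intros. rewrite <- (Rpower_O x) by lra. apply Rle_Rpower; auto. Qed.

Lemma Rpower_le1 x e : 1 <= x -> e <= 0 -> Rpower x e <= 1.
Proof. intros. rewrite <- (Rpower_O x) by lra. apply Rle_Rpower; auto. Qed.

Lemma derivable_pt_lim_ext f g x l :
  (forall y, f y = g y) -> derivable_pt_lim f x l -> derivable_pt_lim g x l.
Proof. intros E. apply (derivable_pt_lim_locally_ext f g x (x - 1) (x + 1)); auto; lra. Qed.

(* phi a x = |x|^a, whose derivative is a * psi a x with psi a x = sgn x |x|^(a-1). *)
Definition phi (a x : R) : R := rpow (Rabs x) a.
Definition psi (a x : R) : R := if Rle_dec 0 x then rpow x (a - 1) else - rpow (- x) (a - 1).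

Lemma psi_odd a x : psi a (- x) = - psi a x.
Proof.
  unfold psi. destruct (Rle_dec 0 (- x)), (Rle_dec 0 x).
  - replace x with 0 by lra. rewrite Ropp_0, rpow_0; ring.
  - rewrite Ropp_involutive; auto.
  - rewrite Ropp_involutive; ring.
  - lra.
Qed.

Lemma phi_deriv_nonneg a x : 1 < a -> 0 <= x -> derivable_pt_lim (phi a) x (a * psi a x).
Proof.
  intros Ha Hx. unfold psi. destruct (Rle_dec 0 x) as [_|]; [|lra].
  destruct (Req_dec x 0) as [->|Hx0].
  - (* at 0: |h|^a / |h| = |h|^(a-1) tends to 0 *)
    rewrite rpow_0, Rmult_0_r. intros eps Heps.
    exists (mkposreal _ (Rpower_pos eps (/ (a - 1)))). intros h Hh Hhd. simpl in Hhd.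
    unfold phi. rewrite Rplus_0_l, Rabs_R0, rpow_0, !Rminus_0_r.
    assert (Hh' : 0 < Rabs h) by (apply Rabs_pos_lt; auto).
    rewrite rpow_of_pos by auto. unfold Rdiv. rewrite Rabs_mult, Rabs_inv.
    rewrite (Rabs_pos_eq (Rpower _ _)) by (left; apply Rpower_pos).
    rewrite (Rpower_split (Rabs h) a) by auto.
    replace (Rabs h * Rpower (Rabs h) (a - 1) * / Rabs h) with (Rpower (Rabs h) (a - 1))
      by (field; lra).
    replace eps with (Rpower (Rpower eps (/ (a - 1))) (a - 1)).
    + apply Rlt_Rpower_l; [lra|split; auto].
    + rewrite Rpower_mult. replace (/ (a - 1) * (a - 1)) with 1 by (field; lra).
      apply Rpower_1; auto.
  - rewrite rpow_of_pos by lra.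
    apply (derivable_pt_lim_locally_ext (fun y => Rpower y a) _ x 0 (2 * x)); [lra| |].
    + intros y Hy. unfold phi. rewrite Rabs_pos_eq, rpow_of_pos; lra.
    + apply derivable_pt_lim_power; lra.
Qed.

Lemma phi_deriv a x : 1 < a -> derivable_pt_lim (phi a) x (a * psi a x).
Proof.
  intros Ha. destruct (Rle_dec 0 x) as [Hx|Hx]; [apply phi_deriv_nonneg; auto|].
  (* phi is even and psi is odd *)
  apply (derivable_pt_lim_ext (mirr_fct (phi a))).
  { intros y. unfold mirr_fct, phi. rewrite Rabs_Ropp. auto. }
  apply derivable_pt_lim_mirr_fwd.
  replace (- (a * psi a x)) with (a * psi a (- x)) by (rewrite psi_odd; ring).
  apply phi_deriv_nonneg; lra.
Qed.

(* The increment of psi on a nonnegative interval [u, v], by the mean value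
   theorem for y^(a-1) (whose derivative (a-1) y^(a-2) is at least (a-1) v^(a-2)). *)
Lemma psi_increment_nonneg a u v : 1 < a < 2 -> 0 <= u < v ->
  (a - 1) / 2 * (v - u) * Rpower v (a - 2) <= psi a v - psi a u.
Proof.
  intros Ha Huv. unfold psi.
  destruct (Rle_dec 0 v); [|lra]. destruct (Rle_dec 0 u); [|lra].
  rewrite (rpow_of_pos v) by lra.
  assert (Pv : 0 < Rpower v (a - 2)) by apply Rpower_pos.
  destruct (Req_dec u 0) as [->|Hu0].
  - rewrite rpow_0, (Rpower_split v (a - 1)) by lra.
    replace (a - 1 - 1) with (a - 2) by ring.
    assert (v * Rpower v (a - 2) * ((a - 1) / 2) <= v * Rpower v (a - 2) * 1)
      by (apply Rmult_le_compat_l; [apply Rmult_le_pos|]; lra).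
    lra.
  - rewrite rpow_of_pos by lra.
    destruct (MVT_cor2 (fun y => Rpower y (a - 1)) (fun y => (a - 1) * Rpower y (a - 1 - 1)) u v)
      as [c [Hc Hcuv]]; [lra|intros c Hc; apply derivable_pt_lim_power; lra|].
    rewrite Hc. replace (a - 1 - 1) with (a - 2) by ring.
    assert (Rpower v (a - 2) <= Rpower c (a - 2)) by (apply Rpower_antitone_base; lra).
    assert (0 <= ((a - 1) * (v - u)) * (Rpower c (a - 2) - Rpower v (a - 2) / 2))
      by (apply Rmult_le_pos; nra).
    nra.
Qed.

Lemma psi_increment a u v : 1 < a < 2 -> u < v ->
  (a - 1) / 2 * (v - u) * Rpower (Rmax (Rabs u) (Rabs v)) (a - 2) <= psi a v - psi a u.
Proof.
  intros Ha Huv.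
  destruct (Rle_dec 0 u) as [Hu|Hu].
  - rewrite !Rabs_pos_eq, Rmax_right by lra. apply psi_increment_nonneg; lra.
  - destruct (Rle_dec v 0) as [Hv|Hv].
    + rewrite (Rabs_left u), (Rabs_left1 v), Rmax_left by lra.
      replace (psi a v - psi a u) with (psi a (- u) - psi a (- v)) by (rewrite !psi_odd; ring).
      replace (v - u) with (- u - - v) by ring. apply psi_increment_nonneg; lra.
    + (* u < 0 < v: the increment is |u|^(a-1) + v^(a-1) >= max^(a-1) *)
      rewrite (Rabs_left u), (Rabs_pos_eq v) by lra. unfold psi.
      destruct (Rle_dec 0 v); [|lra]. destruct (Rle_dec 0 u); [lra|].
      rewrite !rpow_of_pos by lra.
      set (mx := Rmax (- u) v).
      assert (Hmx : - u <= mx /\ v <= mx) by (split; [apply Rmax_l|apply Rmax_r]).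
      assert (Hmx' : mx = - u \/ mx = v) by (unfold mx, Rmax; destruct (Rle_dec (- u) v); auto).
      assert (Pv : 0 < Rpower v (a - 1)) by apply Rpower_pos.
      assert (Pu : 0 < Rpower (- u) (a - 1)) by apply Rpower_pos.
      assert (Hm : Rpower mx (a - 1) <= Rpower v (a - 1) + Rpower (- u) (a - 1))
        by (destruct Hmx' as [E|E]; rewrite E; lra).
      rewrite (Rpower_split mx) in Hm by lra. replace (a - 1 - 1) with (a - 2) in Hm by ring.
      assert (0 < Rpower mx (a - 2)) by apply Rpower_pos.
      assert ((a - 1) / 2 * (v - u) * Rpower mx (a - 2) <= mx * Rpower mx (a - 2))
        by (apply Rmult_le_compat_r; [lra|nra]).
      lra.
Qed.

Lemma Rmax_abs_pos u v : u <> v -> 0 < Rmax (Rabs u) (Rabs v).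
Proof.
  intros Huv. destruct (Req_dec u 0) as [->|Hu].
  - apply Rlt_le_trans with (Rabs v); [apply Rabs_pos_lt; auto|apply Rmax_r].
  - apply Rlt_le_trans with (Rabs u); [apply Rabs_pos_lt; auto|apply Rmax_l].
Qed.

Lemma shift_scale_bound a d M mx : 1 < a < 2 -> 1 <= d -> 1 <= M -> 0 < mx -> mx <= M + d ->
  Rpower 2 (a - 2) * Rpower M (a - 2) <= d * Rpower mx (a - 2).
Proof.
  intros Ha Hd HM Hmx Hle.
  assert (P2 : 0 < Rpower 2 (a - 2)) by apply Rpower_pos.
  assert (PM : 0 < Rpower M (a - 2)) by apply Rpower_pos.
  assert (Pmx : 0 < Rpower mx (a - 2)) by apply Rpower_pos.
  destruct (Rle_dec d M).
  - assert (H2M : Rpower (2 * M) (a - 2) <= Rpower mx (a - 2)) by (apply Rpower_antitone_base; lra).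
    rewrite <- Rpower_mult_distr in H2M by lra. nra.
  - assert (H2d : Rpower (2 * d) (a - 2) <= Rpower mx (a - 2)) by (apply Rpower_antitone_base; lra).
    rewrite <- Rpower_mult_distr in H2d by lra.
    assert (Ed : d * Rpower d (a - 2) = Rpower d (a - 1)).
    { rewrite (Rpower_split d (a - 1)) by lra. do 2 f_equal; ring. }
    assert (1 <= Rpower d (a - 1)) by (apply Rpower_ge1; lra).
    assert (Rpower M (a - 2) <= 1) by (apply Rpower_le1; lra).
    assert (d * (Rpower 2 (a - 2) * Rpower d (a - 2)) <= d * Rpower mx (a - 2))
      by (apply Rmult_le_compat_l; lra).
    nra.
Qed.

Lemma psi_abs_increment a t D : 1 < a < 2 -> D <> 0 ->
  (a - 1) / 2 * Rabs D * Rpower (Rmax (Rabs t) (Rabs (t + D))) (a - 2)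
  <= Rabs (psi a (t + D) - psi a t).
Proof.
  intros Ha HD.
  assert (Hpow : 0 < Rpower (Rmax (Rabs t) (Rabs (t + D))) (a - 2)) by apply Rpower_pos.
  destruct (Rlt_dec 0 D).
  - assert (H := psi_increment a t (t + D) Ha ltac:(lra)).
    replace (t + D - t) with D in H by ring.
    assert (0 <= (a - 1) / 2 * D * Rpower (Rmax (Rabs t) (Rabs (t + D))) (a - 2))
      by (apply Rmult_le_pos; [apply Rmult_le_pos|]; lra).
    rewrite (Rabs_pos_eq D), (Rabs_pos_eq (psi a (t + D) - psi a t)); lra.
  - assert (H := psi_increment a (t + D) t Ha ltac:(lra)).
    replace (t - (t + D)) with (- D) in H by ring. rewrite Rmax_comm in H.
    assert (0 <= (a - 1) / 2 * (- D) * Rpower (Rmax (Rabs t) (Rabs (t + D))) (a - 2))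
      by (apply Rmult_le_pos; [apply Rmult_le_pos|]; lra).
    rewrite (Rabs_left D), (Rabs_minus_sym (psi a (t + D))), (Rabs_pos_eq (psi a t - _)); lra.
Qed.

Lemma difference_phase_deriv a D c : 1 < a ->
  derivable_pt_lim (fun t => phi a (t + D) - phi a t) c (a * psi a (c + D) - a * psi a c).
Proof.
  intros Ha.
  apply (derivable_pt_lim_ext (comp (phi a) (fun t => (t + D)%R) - phi a)%F); [reflexivity|].
  apply derivable_pt_lim_minus; [|apply phi_deriv; auto].
  replace (a * psi a (c + D)) with (a * psi a (c + D) * 1) by ring.
  apply derivable_pt_lim_comp; [|apply phi_deriv; auto].
  apply (derivable_pt_lim_ext (id + fct_cte D)%F); [reflexivity|].
  replace 1 with (1 + 0) by ring.
  apply derivable_pt_lim_plus; [apply derivable_pt_lim_id|apply derivable_pt_lim_const].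
Qed.

Definition lam_diff (a : R) := a * (a - 1) / 2 * Rpower 2 (a - 2).

Lemma lam_diff_pos a : 1 < a < 2 -> 0 < lam_diff a.
Proof.
  intros. unfold lam_diff. apply Rmult_lt_0_compat; [|apply Rpower_pos].
  assert (0 < a * (a - 1)) by nra. lra.
Qed.

Lemma difference_phase_separation a x y D A B M : 1 < a < 2 -> x < y -> 1 <= Rabs D -> 1 <= M ->
  (A <= M \/ B <= M) ->
  Rabs x <= A -> Rabs y <= A -> Rabs (x + D) <= B -> Rabs (y + D) <= B ->
  lam_diff a * Rpower M (a - 2) * (y - x) <=
  Rabs ((phi a (y + D) - phi a y) - (phi a (x + D) - phi a x)).
Proof.
  intros Ha Hxy HD HM HAB Hx Hy HxD HyD.
  destruct (MVT_cor2 (fun t => phi a (t + D) - phi a t)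
              (fun t => a * psi a (t + D) - a * psi a t) x y) as [c [Hc Hcxy]]; auto.
  { intros; apply difference_phase_deriv; lra. }
  rewrite Hc, Rabs_mult, (Rabs_pos_eq (y - x)) by lra.
  apply Rmult_le_compat_r; [lra|].
  replace (a * psi a (c + D) - a * psi a c) with (a * (psi a (c + D) - psi a c)) by ring.
  rewrite Rabs_mult, (Rabs_pos_eq a) by lra.
  assert (HD0 : D <> 0) by (intros E; rewrite E, Rabs_R0 in HD; lra).
  assert (Hpsi := psi_abs_increment a c D Ha HD0).
  apply Rabs_le_iff in Hx, Hy, HxD, HyD.
  assert (Hc' : Rabs c <= A) by (apply Rabs_le_iff; lra).
  assert (HcD : Rabs (c + D) <= B) by (apply Rabs_le_iff; lra).
  set (mx := Rmax (Rabs c) (Rabs (c + D))) in *.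
  assert (Hmx0 : 0 < mx) by (apply Rmax_abs_pos; lra).
  assert (Hmx1 : mx <= M + Rabs D).
  { unfold mx. assert (T1 := Rabs_triang c D).
    assert (T2 := Rabs_triang (c + D) (- D)). rewrite Rabs_Ropp in T2.
    replace (c + D + - D) with c in T2 by ring.
    apply Rmax_lub; lra. }
  assert (Hscale := shift_scale_bound a (Rabs D) M mx Ha HD HM Hmx0 Hmx1).
  unfold lam_diff.
  assert (0 <= a * ((a - 1) / 2)) by nra.
  apply Rle_trans with (a * ((a - 1) / 2) * (Rabs D * Rpower mx (a - 2))).
  { replace (a * (a - 1) / 2 * Rpower 2 (a - 2) * Rpower M (a - 2)) with
       (a * ((a - 1) / 2) * (Rpower 2 (a - 2) * Rpower M (a - 2))) by (field; lra).
    apply Rmult_le_compat_l; auto. }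
  replace (a * ((a - 1) / 2) * (Rabs D * Rpower mx (a - 2))) with
      (a * ((a - 1) / 2 * Rabs D * Rpower mx (a - 2))) by ring.
  apply Rmult_le_compat_l; lra.
Qed.

Lemma sum_phase_deriv a s c : 1 < a ->
  derivable_pt_lim (fun t => phi a t + phi a (s - t)) c (a * psi a c - a * psi a (s - c)).
Proof.
  intros Ha.
  apply (derivable_pt_lim_ext (phi a + comp (phi a) (fun t => (s - t)%R))%F); [reflexivity|].
  replace (a * psi a c - a * psi a (s - c)) with (a * psi a c + a * psi a (s - c) * (0 - 1))
    by ring.
  apply derivable_pt_lim_plus; [apply phi_deriv; auto|].
  apply derivable_pt_lim_comp; [|apply phi_deriv; auto].
  apply (derivable_pt_lim_ext (fct_cte s - id)%F); [reflexivity|].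
  apply derivable_pt_lim_minus; [apply derivable_pt_lim_const|apply derivable_pt_lim_id].
Qed.

Definition lam_sum (a : R) := a * (a - 1) / 2.

Lemma lam_sum_pos a : 1 < a < 2 -> 0 < lam_sum a.
Proof. intros. unfold lam_sum. assert (0 < a * (a - 1)) by nra. lra. Qed.

Lemma sum_phase_convexity a s A B M u v : 1 < a < 2 -> 1 <= M -> (A <= M \/ B <= M) -> u < v ->
  Rabs u <= A -> Rabs v <= A -> Rabs (s - u) <= B -> Rabs (s - v) <= B ->
  lam_sum a * Rpower M (a - 2) * (v - u) <=
  (a * psi a v - a * psi a (s - v)) - (a * psi a u - a * psi a (s - u)).
Proof.
  intros Ha HM HAB Huv Hu Hv Hsu Hsv.
  assert (Hinc1 := psi_increment a u v Ha Huv).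
  assert (Hinc2 := psi_increment a (s - v) (s - u) Ha ltac:(lra)).
  replace (s - u - (s - v)) with (v - u) in Hinc2 by ring.
  set (mx1 := Rmax (Rabs u) (Rabs v)) in *.
  set (mx2 := Rmax (Rabs (s - v)) (Rabs (s - u))) in *.
  assert (P1 : 0 < mx1) by (apply Rmax_abs_pos; lra).
  assert (P2 : 0 < mx2) by (apply Rmax_abs_pos; lra).
  assert (Q1 : 0 < Rpower mx1 (a - 2)) by apply Rpower_pos.
  assert (Q2 : 0 < Rpower mx2 (a - 2)) by apply Rpower_pos.
  (* one of the two psi increments sees a scale <= M *)
  assert (Hm : Rpower M (a - 2) <= Rpower mx1 (a - 2) + Rpower mx2 (a - 2)).
  { destruct HAB.
    - assert (mx1 <= M) by (unfold mx1; apply Rmax_lub; lra).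
      assert (Rpower M (a - 2) <= Rpower mx1 (a - 2)) by (apply Rpower_antitone_base; lra). lra.
    - assert (mx2 <= M) by (unfold mx2; apply Rmax_lub; lra).
      assert (Rpower M (a - 2) <= Rpower mx2 (a - 2)) by (apply Rpower_antitone_base; lra). lra. }
  unfold lam_sum.
  assert (0 <= a * (a - 1) / 2 * (v - u)) by (assert (0 < a * (a - 1)) by nra; nra).
  apply Rle_trans with (a * (a - 1) / 2 * (v - u) * (Rpower mx1 (a - 2) + Rpower mx2 (a - 2))).
  { replace (a * (a - 1) / 2 * Rpower M (a - 2) * (v - u))
      with (a * (a - 1) / 2 * (v - u) * Rpower M (a - 2)) by ring.
    apply Rmult_le_compat_l; auto. }
  assert (a * ((a - 1) / 2 * (v - u) * Rpower mx1 (a - 2)) <= a * (psi a v - psi a u))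
    by (apply Rmult_le_compat_l; lra).
  assert (a * ((a - 1) / 2 * (v - u) * Rpower mx2 (a - 2)) <= a * (psi a (s - u) - psi a (s - v)))
    by (apply Rmult_le_compat_l; lra).
  lra.
Qed.

Lemma convexified_sum_phase_deriv a s lam t : 1 < a ->
  derivable_pt_lim (fun t => phi a t + phi a (s - t) - lam / 2 * (t * t)) t
    (a * psi a t - a * psi a (s - t) - lam * t).
Proof.
  intros Ha.
  apply (derivable_pt_lim_ext
           ((fun t => (phi a t + phi a (s - t))%R) - mult_real_fct (lam / 2) (id * id))%F);
    [reflexivity|].
  replace (a * psi a t - a * psi a (s - t) - lam * t)
    with (a * psi a t - a * psi a (s - t) - lam / 2 * (1 * id t + id t * 1)) by (unfold id; field).
  apply derivable_pt_lim_minus; [apply sum_phase_deriv; lra|].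
  apply derivable_pt_lim_scal, derivable_pt_lim_mult; apply derivable_pt_lim_id.
Qed.

(* Three points x < y < w with gaps > L where the sum phase is within C0 of c
   force lam_sum a M^(a-2) L^2 < 4 C0: the chord slopes of the convex function
   h(t) - lam/2 t^2 must increase, while |chord slopes of h| <= 2 C0 / L. *)
Lemma sum_phase_no_spread_triple a s x y w A B M c C0 L : 1 < a < 2 -> x < y < w ->
  1 <= M -> (A <= M \/ B <= M) ->
  Rabs x <= A -> Rabs w <= A -> Rabs (s - x) <= B -> Rabs (s - w) <= B ->
  Rabs (phi a x + phi a (s - x) - c) <= C0 ->
  Rabs (phi a y + phi a (s - y) - c) <= C0 ->
  Rabs (phi a w + phi a (s - w) - c) <= C0 ->
  0 < L -> y - x > L -> w - y > L ->
  lam_sum a * Rpower M (a - 2) * (L * L) < 4 * C0.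
Proof.
  intros Ha Hxyw HM HAB Hx Hw Hsx Hsw Fx Fy Fw HL Hgap1 Hgap2.
  set (lam := lam_sum a * Rpower M (a - 2)).
  assert (Hlam : 0 < lam) by (apply Rmult_lt_0_compat; [apply lam_sum_pos; auto|apply Rpower_pos]).
  set (h := fun t => phi a t + phi a (s - t) - lam / 2 * (t * t)).
  set (h' := fun t => a * psi a t - a * psi a (s - t) - lam * t).
  assert (Dh : forall t, derivable_pt_lim h t (h' t))
    by (intros; apply convexified_sum_phase_deriv; lra).
  destruct (MVT_cor2 h h' x y) as [e1 [E1 He1]]; [lra|intros; apply Dh|].
  destruct (MVT_cor2 h h' y w) as [e2 [E2 He2]]; [lra|intros; apply Dh|].
  apply Rabs_le_iff in Hx, Hw, Hsx, Hsw, Fx, Fy, Fw.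
  assert (Mono : h' e1 <= h' e2).
  { assert (Hconv := sum_phase_convexity a s A B M e1 e2 Ha HM HAB ltac:(lra));
      unfold h'; fold lam in Hconv.
    assert (lam * (e2 - e1) <= a * psi a e2 - a * psi a (s - e2) - (a * psi a e1 - a * psi a (s - e1)))
      by (apply Hconv; apply Rabs_le_iff; lra).
    lra. }
  set (F1 := phi a y + phi a (s - y) - (phi a x + phi a (s - x))).
  set (F2 := phi a w + phi a (s - w) - (phi a y + phi a (s - y))).
  assert (G1 : h' e1 = F1 / (y - x) - lam / 2 * (x + y)).
  { apply (Rmult_eq_reg_r (y - x)); [|lra]. rewrite <- E1. unfold h, F1. field. lra. }
  assert (G2 : h' e2 = F2 / (w - y) - lam / 2 * (y + w)).
  { apply (Rmult_eq_reg_r (w - y)); [|lra]. rewrite <- E2. unfold h, F2. field. lra. }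
  assert (B1 : - (F1 / (y - x)) <= 2 * C0 / L).
  { unfold Rdiv. apply Rle_trans with (2 * C0 * / (y - x)).
    - rewrite Ropp_mult_distr_l. apply Rmult_le_compat_r; [left; apply Rinv_0_lt_compat; lra|].
      unfold F1; lra.
    - apply Rmult_le_compat_l; [lra|]. apply Rinv_le_contravar; lra. }
  assert (B2 : F2 / (w - y) <= 2 * C0 / L).
  { unfold Rdiv. apply Rle_trans with (2 * C0 * / (w - y)).
    - apply Rmult_le_compat_r; [left; apply Rinv_0_lt_compat; lra|]. unfold F2; lra.
    - apply Rmult_le_compat_l; [lra|]. apply Rinv_le_contravar; lra. }
  assert (K : lam * L < 4 * C0 / L).
  { assert (lam * L < lam * (w - x) / 2) by nra.
    rewrite G1, G2 in Mono. unfold Rdiv in *. lra. }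
  apply (Rmult_lt_compat_r L) in K; auto.
  replace (4 * C0 / L * L) with (4 * C0) in K by (field; lra).
  replace (lam * (L * L)) with (lam * L * L) by ring. exact K.
Qed.

Lemma nat_between r : 0 <= r -> exists L : nat, r <= INR L <= r + 1.
Proof.
  intros Hr. destruct (archimed r) as [H1 H2].
  assert (Hz : (0 < up r)%Z) by (apply lt_IZR; lra).
  exists (Z.to_nat (up r)). rewrite INR_IZR_INZ, Z2Nat.id by lia. lra.
Qed.

Lemma IZR_gap x y (L : nat) : (y - x > Z.of_nat L)%Z -> IZR y - IZR x > INR L.
Proof. intros H. rewrite INR_IZR_INZ, <- minus_IZR. apply IZR_lt. lia. Qed.

Lemma Rpower_sum_exponents a M : 0 < M ->
  Rpower M (a - 2) * (Rpower M (1 - a / 2) * Rpower M (1 - a / 2)) = 1.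
Proof.
  intros HM. rewrite <- !Rpower_plus.
  replace (a - 2 + (1 - a / 2 + (1 - a / 2))) with 0 by field. apply Rpower_O; auto.
Qed.

Definition K_diff (a C0 : R) := 4 * C0 / lam_diff a + 4.
Definition K_sum (a C0 : R) := 2 * sqrt (4 * C0 / lam_sum a) + 4.

Lemma K_diff_pos a C0 : 1 < a < 2 -> 0 < C0 -> 0 < K_diff a C0.
Proof.
  intros Ha HC. unfold K_diff, Rdiv.
  assert (0 < 4 * C0 * / lam_diff a); [|lra].
  apply Rmult_lt_0_compat; [lra|]. apply Rinv_0_lt_compat, lam_diff_pos; auto.
Qed.

Lemma K_sum_pos a C0 : 0 < K_sum a C0.
Proof. unfold K_sum. assert (0 <= sqrt (4 * C0 / lam_sum a)) by apply sqrt_pos. lra. Qed.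

(* Difference-type resonance count: the integers x with |x| <= A, |x + D| <= B,
   D <> 0 and | |x + D|^a - |x|^a - c | <= C0 number at most
   K_diff a C0 * M^(2-a), where min(A, B) <= M.  (Two of them differ by at
   most 2 C0 / (lam_diff a M^(a-2)).) *)
Lemma count_difference_resonance a C0 (l : list Z) (f : Z -> R) (A B : nat) (M : R) (D : Z) c :
  1 < a < 2 -> 0 < C0 -> NoDup l -> 1 <= M -> (INR A <= M \/ INR B <= M) ->
  (forall x, 0 <= f x <= 1) ->
  (forall x, 0 < f x -> D <> 0%Z /\ Rabs (IZR x) <= INR A /\ Rabs (IZR (x + D)) <= INR B /\
      Rabs (phi a (IZR (x + D)) - phi a (IZR x) - c) <= C0) ->
  gsum l f <= K_diff a C0 * Rpower M (2 - a).
Proof.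
  intros Ha HC Hnd HM HAB Hf Hsupp.
  assert (Hlam := lam_diff_pos a Ha).
  assert (PM : 1 <= Rpower M (2 - a)) by (apply Rpower_ge1; lra).
  set (r := 2 * C0 / lam_diff a * Rpower M (2 - a)).
  assert (Hr : 0 <= r).
  { unfold r, Rdiv. apply Rmult_le_pos; [|lra].
    apply Rmult_le_pos; [lra|left; apply Rinv_0_lt_compat; auto]. }
  assert (Er : lam_diff a * Rpower M (a - 2) * r = 2 * C0).
  { unfold r. replace (2 - a) with (- (a - 2)) by ring. rewrite Rpower_Ropp.
    assert (0 < Rpower M (a - 2)) by apply Rpower_pos. field; lra. }
  destruct (nat_between r Hr) as [L [HL1 HL2]].
  eapply Rle_trans.
  - apply (gsum_le_of_no_spread_triple l f L); auto.
    intros x y w Px Py _ Hxyw Hyx _.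
    destruct (Hsupp x Px) as [HD [Hx1 [Hx2 Hx3]]]. destruct (Hsupp y Py) as [_ [Hy1 [Hy2 Hy3]]].
    rewrite plus_IZR in Hx2, Hx3, Hy2, Hy3.
    assert (HD1 : 1 <= Rabs (IZR D)) by (rewrite <- abs_IZR; apply IZR_le; lia).
    assert (Hxy : IZR x < IZR y) by (apply IZR_lt; lia).
    assert (Hsep := difference_phase_separation a (IZR x) (IZR y) (IZR D) (INR A) (INR B) M
                      Ha Hxy HD1 HM HAB Hx1 Hy1 Hx2 Hy2).
    assert (Hclose : Rabs (phi a (IZR y + IZR D) - phi a (IZR y)
                          - (phi a (IZR x + IZR D) - phi a (IZR x))) <= 2 * C0).
    { apply Rabs_le_iff in Hx3, Hy3. apply Rabs_le_iff. lra. }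
    assert (Hg := IZR_gap x y L Hyx).
    assert (0 < lam_diff a * Rpower M (a - 2)) by (apply Rmult_lt_0_compat; auto; apply Rpower_pos).
    assert (lam_diff a * Rpower M (a - 2) * r < lam_diff a * Rpower M (a - 2) * (IZR y - IZR x))
      by (apply Rmult_lt_compat_l; lra).
    lra.
  - unfold K_diff.
    replace ((4 * C0 / lam_diff a + 4) * Rpower M (2 - a)) with (2 * r + 4 * Rpower M (2 - a))
      by (unfold r; field; lra).
    lra.
Qed.

Lemma count_sum_resonance a C0 (l : list Z) (f : Z -> R) (A B : nat) (M : R) (s : Z) c :
  1 < a < 2 -> 0 < C0 -> NoDup l -> 1 <= M -> (INR A <= M \/ INR B <= M) ->
  (forall x, 0 <= f x <= 1) ->
  (forall x, 0 < f x -> Rabs (IZR x) <= INR A /\ Rabs (IZR (s - x)) <= INR B /\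
      Rabs (phi a (IZR x) + phi a (IZR (s - x)) - c) <= C0) ->
  gsum l f <= K_sum a C0 * Rpower M (1 - a / 2).
Proof.
  intros Ha HC Hnd HM HAB Hf Hsupp.
  assert (Hlam := lam_sum_pos a Ha).
  assert (PM : 1 <= Rpower M (1 - a / 2)) by (apply Rpower_ge1; lra).
  assert (Hq : 0 < 4 * C0 / lam_sum a)
    by (unfold Rdiv; apply Rmult_lt_0_compat; [lra|apply Rinv_0_lt_compat; auto]).
  assert (Hsq : 0 < sqrt (4 * C0 / lam_sum a)) by (apply sqrt_lt_R0; auto).
  set (r := sqrt (4 * C0 / lam_sum a) * Rpower M (1 - a / 2)).
  assert (Hr : 0 < r) by (unfold r; apply Rmult_lt_0_compat; lra).
  assert (Er : lam_sum a * Rpower M (a - 2) * (r * r) = 4 * C0).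
  { unfold r.
    replace (lam_sum a * Rpower M (a - 2) * (sqrt (4 * C0 / lam_sum a) * Rpower M (1 - a / 2) *
              (sqrt (4 * C0 / lam_sum a) * Rpower M (1 - a / 2))))
      with (lam_sum a * (sqrt (4 * C0 / lam_sum a) * sqrt (4 * C0 / lam_sum a)) *
            (Rpower M (a - 2) * (Rpower M (1 - a / 2) * Rpower M (1 - a / 2)))) by ring.
    rewrite sqrt_sqrt, Rpower_sum_exponents by lra. field; lra. }
  destruct (nat_between r ltac:(lra)) as [L [HL1 HL2]].
  eapply Rle_trans.
  - apply (gsum_le_of_no_spread_triple l f L); auto.
    intros x y w Px Py Pw Hxyw Hyx Hwy.
    destruct (Hsupp x Px) as [Hx1 [Hx2 Hx3]]. destruct (Hsupp y Py) as [Hy1 [Hy2 Hy3]].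
    destruct (Hsupp w Pw) as [Hw1 [Hw2 Hw3]].
    rewrite minus_IZR in Hx2, Hx3, Hy3, Hw2, Hw3.
    assert (Hxy : IZR x < IZR y < IZR w) by (split; apply IZR_lt; lia).
    assert (G1 := IZR_gap x y L Hyx). assert (G2 := IZR_gap y w L Hwy).
    assert (Hlt := sum_phase_no_spread_triple a (IZR s) (IZR x) (IZR y) (IZR w) (INR A) (INR B)
                     M c C0 (INR L) Ha Hxy HM HAB Hx1 Hw1 Hx2 Hw2 Hx3 Hy3 Hw3 ltac:(lra) G1 G2).
    assert (0 < lam_sum a * Rpower M (a - 2)) by (apply Rmult_lt_0_compat; auto; apply Rpower_pos).
    assert (r * r <= INR L * INR L) by (apply Rmult_le_compat; lra).
    assert (lam_sum a * Rpower M (a - 2) * (r * r) <= lam_sum a * Rpower M (a - 2) * (INR L * INR L))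
      by (apply Rmult_le_compat_l; lra).
    lra.
  - unfold K_sum.
    replace ((2 * sqrt (4 * C0 / lam_sum a) + 4) * Rpower M (1 - a / 2))
      with (2 * r + 4 * Rpower M (1 - a / 2)) by (unfold r; ring).
    lra.
Qed.

Lemma gsum_fiber_le (l1 l2 : list Z) (F : Z -> Z -> R) (j : Z -> Z) :
  NoDup l2 -> (forall x y, 0 <= F x y) -> (forall x y, y <> j x -> F x y = 0) ->
  gsum l1 (fun x => gsum l2 (fun y => F x y)) <= gsum l1 (fun x => F x (j x)).
Proof. intros Hnd Hpos Hzero. apply gsum_le; intros x. apply gsum_le_single_point; auto. Qed.

Lemma Rabs_le_of_eq u v C : Rabs v <= C -> u = v \/ u = - v -> Rabs u <= C.
Proof. intros Hv [->| ->]; [|rewrite Rabs_Ropp]; auto. Qed.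

Lemma Rabs_IZR_le x (M : nat) : (Z.abs x <= Z.of_nat M)%Z -> Rabs (IZR x) <= INR M.
Proof. intros H. rewrite <- abs_IZR, INR_IZR_INZ. apply IZR_le; auto. Qed.

Lemma INR_ge1 n : (1 <= n)%nat -> 1 <= INR n.
Proof. intros H. apply le_INR in H. auto. Qed.

Lemma INR_min_case (p q : nat) : INR p <= INR (Nat.min p q) \/ INR q <= INR (Nat.min p q).
Proof. destruct (Nat.min_spec p q) as [[_ E]|[_ E]]; rewrite E; lra. Qed.

Lemma pow2_ge1 n : (1 <= 2 ^ n)%nat.
Proof. induction n; simpl; lia. Qed.

Section BaseTensor.
Variables (a C0 m : R) (N N1 N2 N3 : nat).
Local Notation T := (Tb a C0 m N N1 N2 N3).

Lemma Tb_01 k k1 k2 k3 : 0 <= T k k1 k2 k3 <= 1.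
Proof. unfold Tb. repeat match goal with |- context [if ?c then _ else _] => destruct c end; lra. Qed.

Lemma Tb_zero k k1 k2 k3 : k <> (k1 - k2 + k3)%Z -> T k k1 k2 k3 = 0.
Proof. intros H. unfold Tb. destruct (Z.eq_dec k (k1 - k2 + k3)); [contradiction|auto]. Qed.

Lemma Tb_support k k1 k2 k3 : 0 < T k k1 k2 k3 ->
  k = (k1 - k2 + k3)%Z /\ k2 <> k1 /\ k2 <> k3 /\
  Rabs (phi a (IZR k1) - phi a (IZR k2) + phi a (IZR k3) - phi a (IZR k) - m) <= C0 /\
  Rabs (IZR k) <= INR N /\ Rabs (IZR k1) <= INR N1 /\
  Rabs (IZR k2) <= INR N2 /\ Rabs (IZR k3) <= INR N3.
Proof.
  intros H. unfold Tb in H.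
  destruct (Z.eq_dec k (k1 - k2 + k3)); [|lra].
  destruct (Z.eq_dec k2 k1); [lra|].
  destruct (Z.eq_dec k2 k3); [lra|].
  match type of H with context [Rle_dec ?x _] => destruct (Rle_dec x C0) as [Hph|]; [|lra] end.
  destruct (Z_le_dec (Z.abs k) (Z.of_nat N)); [|lra].
  destruct (Z_le_dec (Z.abs k1) (Z.of_nat N1)); [|lra].
  destruct (Z_le_dec (Z.abs k2) (Z.of_nat N2)); [|lra].
  destruct (Z_le_dec (Z.abs k3) (Z.of_nat N3)); [|lra].
  unfold phi. rewrite !abs_IZR in Hph.
  repeat split; auto; apply Rabs_IZR_le; auto.
Qed.

Hypothesis Ha : 1 < a < 2.
Hypothesis HC : 0 < C0.
Hypotheses (HN : (1 <= N)%nat) (HN1 : (1 <= N1)%nat) (HN2 : (1 <= N2)%nat) (HN3 : (1 <= N3)%nat).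

(* The six partial sums of T over two of its indices.  In each, the
   constraint k = k1 - k2 + k3 leaves one free integer, and the phase
   condition becomes a resonance of difference type (when the two summed
   indices have opposite signs in the constraint) or of sum type. *)

Lemma sum_over_k2_k3 k k1 : zsum (zbox N2) (fun k2 => zsum (zbox N3) (fun k3 => T k k1 k2 k3))
  <= K_diff a C0 * Rpower (INR (Nat.min N2 N3)) (2 - a).
Proof.
  eapply Rle_trans; [apply (gsum_fiber_le _ _ _ (fun k2 => k2 + (k - k1))%Z)|].
  { apply zbox_NoDup. } { intros; apply Tb_01. } { intros; apply Tb_zero; lia. }
  apply (count_difference_resonance a C0 _ _ N2 N3 _ (k - k1) (m - phi a (IZR k1) + phi a (IZR k)));
    auto using zbox_NoDup, INR_min_case, Tb_01 with arith.
  - apply INR_ge1; lia.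
  - intros x Hx. destruct (Tb_support _ _ _ _ Hx) as (E & Hne & Hne' & Hph & Hbox).
    repeat split; try tauto; [lia|]. apply (Rabs_le_of_eq _ _ _ Hph); left; ring.
Qed.

Lemma sum_over_k_k1 k2 k3 : zsum (zbox N) (fun k => zsum (zbox N1) (fun k1 => T k k1 k2 k3))
  <= K_diff a C0 * Rpower (INR N1) (2 - a).
Proof.
  eapply Rle_trans; [apply (gsum_fiber_le _ _ _ (fun k => k + (k2 - k3))%Z)|].
  { apply zbox_NoDup. } { intros; apply Tb_01. } { intros; apply Tb_zero; lia. }
  apply (count_difference_resonance a C0 _ _ N N1 _ (k2 - k3) (m + phi a (IZR k2) - phi a (IZR k3)));
    auto using zbox_NoDup, INR_min_case, Tb_01 with arith.
  - apply INR_ge1; lia.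
  - right; lra.
  - intros x Hx. destruct (Tb_support _ _ _ _ Hx) as (E & Hne & Hne' & Hph & Hbox).
    repeat split; try tauto; [lia|]. apply (Rabs_le_of_eq _ _ _ Hph); left; ring.
Qed.

Lemma sum_over_k1_k2 k k3 : zsum (zbox N1) (fun k1 => zsum (zbox N2) (fun k2 => T k k1 k2 k3))
  <= K_diff a C0 * Rpower (INR (Nat.min N1 N2)) (2 - a).
Proof.
  eapply Rle_trans; [apply (gsum_fiber_le _ _ _ (fun k1 => k1 + (k3 - k))%Z)|].
  { apply zbox_NoDup. } { intros; apply Tb_01. } { intros; apply Tb_zero; lia. }
  apply (count_difference_resonance a C0 _ _ N1 N2 _ (k3 - k) (phi a (IZR k3) - phi a (IZR k) - m));
    auto using zbox_NoDup, INR_min_case, Tb_01 with arith.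
  - apply INR_ge1; lia.
  - intros x Hx. destruct (Tb_support _ _ _ _ Hx) as (E & Hne & Hne' & Hph & Hbox).
    repeat split; try tauto; [lia|]. apply (Rabs_le_of_eq _ _ _ Hph); right; ring.
Qed.

Lemma sum_over_k_k3 k1 k2 : zsum (zbox N) (fun k => zsum (zbox N3) (fun k3 => T k k1 k2 k3))
  <= K_diff a C0 * Rpower (INR N3) (2 - a).
Proof.
  eapply Rle_trans; [apply (gsum_fiber_le _ _ _ (fun k => k + (k2 - k1))%Z)|].
  { apply zbox_NoDup. } { intros; apply Tb_01. } { intros; apply Tb_zero; lia. }
  apply (count_difference_resonance a C0 _ _ N N3 _ (k2 - k1) (m - phi a (IZR k1) + phi a (IZR k2)));
    auto using zbox_NoDup, INR_min_case, Tb_01 with arith.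
  - apply INR_ge1; lia.
  - right; lra.
  - intros x Hx. destruct (Tb_support _ _ _ _ Hx) as (E & Hne & Hne' & Hph & Hbox).
    repeat split; try tauto; [lia|]. apply (Rabs_le_of_eq _ _ _ Hph); left; ring.
Qed.

Lemma sum_over_k1_k3 k k2 : zsum (zbox N1) (fun k1 => zsum (zbox N3) (fun k3 => T k k1 k2 k3))
  <= K_sum a C0 * Rpower (INR (Nat.min N1 N3)) (1 - a / 2).
Proof.
  eapply Rle_trans; [apply (gsum_fiber_le _ _ _ (fun k1 => (k + k2) - k1)%Z)|].
  { apply zbox_NoDup. } { intros; apply Tb_01. } { intros; apply Tb_zero; lia. }
  apply (count_sum_resonance a C0 _ _ N1 N3 _ ((k + k2)) (phi a (IZR k2) + phi a (IZR k) + m));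
    auto using zbox_NoDup, INR_min_case, Tb_01 with arith.
  - apply INR_ge1; lia.
  - intros x Hx. destruct (Tb_support _ _ _ _ Hx) as (E & Hne & Hne' & Hph & Hbox).
    repeat split; try tauto. apply (Rabs_le_of_eq _ _ _ Hph); left; ring.
Qed.

Lemma sum_over_k_k2 k1 k3 : zsum (zbox N) (fun k => zsum (zbox N2) (fun k2 => T k k1 k2 k3))
  <= K_sum a C0 * Rpower (INR (Nat.min N N2)) (1 - a / 2).
Proof.
  eapply Rle_trans; [apply (gsum_fiber_le _ _ _ (fun k => (k1 + k3) - k)%Z)|].
  { apply zbox_NoDup. } { intros; apply Tb_01. } { intros; apply Tb_zero; lia. }
  apply (count_sum_resonance a C0 _ _ N N2 _ ((k1 + k3)) (phi a (IZR k1) + phi a (IZR k3) - m));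
    auto using zbox_NoDup, INR_min_case, Tb_01 with arith.
  - apply INR_ge1; lia.
  - intros x Hx. destruct (Tb_support _ _ _ _ Hx) as (E & Hne & Hne' & Hph & Hbox).
    repeat split; try tauto. apply (Rabs_le_of_eq _ _ _ Hph); right; ring.
Qed.

End BaseTensor.

Theorem lemma2p13 :
  forall alpha C0 : R, 1 < alpha < 2 -> 0 < C0 ->
  exists C : R, 0 < C /\
  forall (n n1 n2 n3 : nat) (m : R),
    (n1 <= n)%nat -> (n2 <= n)%nat -> (n3 <= n)%nat ->
    let N := (2 ^ n)%nat in
    let N1 := (2 ^ n1)%nat in
    let N2 := (2 ^ n2)%nat in
    let N3 := (2 ^ n3)%nat in
    let T := Tb alpha C0 m N N1 N2 N3 in
    (* || T ||^2_{k k1 -> k2 k3} *)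
    opnorm2_le (fun k k1 k2 k3 => T k k1 k2 k3)
      (zbox N) (zbox N1) (zbox N2) (zbox N3)
      (C * (Rpower (INR (Nat.min N2 N3)) (2 - alpha) * Rpower (INR N1) (2 - alpha)))
    /\
    (* || T ||^2_{k k3 -> k1 k2} *)
    opnorm2_le (fun k k3 k1 k2 => T k k1 k2 k3)
      (zbox N) (zbox N3) (zbox N1) (zbox N2)
      (C * (Rpower (INR (Nat.min N1 N2)) (2 - alpha) * Rpower (INR N3) (2 - alpha)))
    /\
    (* || T ||^2_{k k2 -> k1 k3} *)
    opnorm2_le (fun k k2 k1 k3 => T k k1 k2 k3)
      (zbox N) (zbox N2) (zbox N1) (zbox N3)
      (C * (Rpower (INR (Nat.min N1 N3)) (1 - alpha / 2)
            * Rpower (INR (Nat.min N N2)) (1 - alpha / 2))).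
Proof.
  intros alpha C0 Ha HC.
  set (Kd := K_diff alpha C0). set (Ks := K_sum alpha C0).
  assert (HKd : 0 < Kd) by (apply K_diff_pos; auto).
  assert (HKs : 0 < Ks) by apply K_sum_pos.
  (* every norm is bounded by Schur's test with constant Kd^2 or Ks^2 *)
  exists (Kd * Kd + Ks * Ks). split; [nra|].
  intros n n1 n2 n3 m _ _ _. cbv zeta.
  assert (HN := pow2_ge1 n). assert (HN1 := pow2_ge1 n1).
  assert (HN2 := pow2_ge1 n2). assert (HN3 := pow2_ge1 n3).
  assert (Hpow : forall x e, 0 <= Rpower x e) by (intros; left; apply Rpower_pos).
  split; [|split].
  - apply (schur_test_scaled _ _ _ _ _ Kd); [intros; apply Tb_01|lra|auto|auto|nra|intros..].
    + apply sum_over_k2_k3; auto.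
    + apply sum_over_k_k1; auto.
  - apply (schur_test_scaled _ _ _ _ _ Kd); [intros; apply Tb_01|lra|auto|auto|nra|intros..].
    + apply sum_over_k1_k2; auto.
    + apply sum_over_k_k3; auto.
  - apply (schur_test_scaled _ _ _ _ _ Ks); [intros; apply Tb_01|lra|auto|auto|nra|intros..].
    + apply sum_over_k1_k3; auto.
    + apply sum_over_k_k2; auto.
Qed.
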